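(* Let $\alpha\colon S\to\mathcal I(X)$ be a representation of a countable discrete inverse semigroup $S$ with identity, and let $A\subseteq X$ be $S$-domain F\o lner. Then for every $\varepsilon>0$ and finite $\mathcal F\subseteq S$ there is a finite non-empty $F_0\subseteq A$ consisting of a single $\approx$-equivalence class (i.e. $u\approx v$ for all $u,v\in F_0$) such that $|\alpha_s(F_0\cap D_{s^*s})\setminus F_0|<\varepsilon|F_0|$ for all $s\in\mathcal F$.
   Context: Inverse semigroup: each $s$ has a unique $s^*$ with $ss^*s=s$, $s^*ss^*=s^*$. A representation is a unital homomorphism $\alpha\colon S\to\mathcal I(X)$ into partial bijections of $X$; $D_{s^*s}$ is the domain of $\alpha_s$. For $u,v\in X$, $u\approx v$ iff there is $s\in S$ with $u\in D_{s^*s}$ and $\alpha_s(u)=v$ (an equivalence relation). $A$ is $S$-domain F\o lner if there are finite non-empty $F_n\subseteq A$ with $|\alpha_s(F_n\cap D_{s^*s})\setminus F_n|/|F_n|\to0$ for every $s\in S$. *)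

From Stdlib Require Import Reals List.
Import ListNotations.
Open Scope R_scope.

Definition is_inverse_monoid {S : Type} (mul : S -> S -> S) (star : S -> S)
  (one : S) : Prop :=
  (forall a b c, mul a (mul b c) = mul (mul a b) c) /\
  (forall a, mul one a = a /\ mul a one = a) /\
  (forall s, mul (mul s (star s)) s = s /\ mul (mul (star s) s) (star s) = star s) /\
  (forall s t, mul (mul s t) s = s -> mul (mul t s) t = t -> t = star s).

(** Countable: enumerated by the naturals (S is non-empty since it has [one]). *)
Definition countable (S : Type) : Prop := exists f : nat -> S, forall s, exists n, f n = s.

Definition pcomp {X : Type} (f g : X -> option X) : X -> option X :=
  fun x => match g x with Some y => f y | None => None end.

Definition partial_bijection {X : Type} (f : X -> option X) : Prop :=
  forall x y z, f x = Some z -> f y = Some z -> x = y.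

(** A representation: unital homomorphism S -> I(X). alpha s x = Some y means
    x is in the domain D_{s*s} of alpha_s and alpha_s(x) = y. *)
Definition is_representation {S X : Type} (mul : S -> S -> S) (one : S)
  (alpha : S -> X -> option X) : Prop :=
  (forall s, partial_bijection (alpha s)) /\
  (forall x, alpha one x = Some x) /\
  (forall s t x, alpha (mul s t) x = pcomp (alpha s) (alpha t) x).

Definition orbit_rel {S X : Type} (alpha : S -> X -> option X) (u v : X) : Prop :=
  exists s, alpha s u = Some v.

Definition card_of {X : Type} (P : X -> Prop) (n : nat) : Prop :=
  exists l : list X, NoDup l /\ (forall y, In y l <-> P y) /\ length l = n.

Definition boundary {S X : Type} (alpha : S -> X -> option X) (s : S) (F : list X)
  : X -> Prop :=
  fun y => (exists x, In x F /\ alpha s x = Some y) /\ ~ In y F.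

Definition fin_nonempty_subset {X : Type} (A : X -> Prop) (F : list X) : Prop :=
  NoDup F /\ F <> [] /\ (forall x, In x F -> A x).

Definition domain_folner {S X : Type} (alpha : S -> X -> option X) (A : X -> Prop)
  : Prop :=
  exists F : nat -> list X,
    (forall n, fin_nonempty_subset A (F n)) /\
    (forall s, exists c : nat -> nat,
        (forall n, card_of (boundary alpha s (F n)) (c n)) /\
        Un_cv (fun n => INR (c n) / INR (length (F n))) 0).

(* Splitting a finite set F along an ≈-class C and its complement splits every
   boundary α_s(F ∩ D_{s*s}) \ F accordingly, since α_s never leaves an orbit.
   Hence the total boundary over the finite family is additive, and so is |F|;
   if their ratio is below ε for F it is below ε for one of the two pieces.
   Peeling off classes one at a time, some single class works.  A starting F
   is a Følner set far enough out, where each of the finitely many boundary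
   ratios is small. *)

From Stdlib Require Import Reals List Wf_nat Lia Lra ClassicalEpsilon.
Import ListNotations.
Open Scope R_scope.

Definition classic_eq_dec {X : Type} (x y : X) : {x = y} + {x <> y} :=
  excluded_middle_informative (x = y).

Lemma card_of_unique {X : Type} (P : X -> Prop) n m :
  card_of P n -> card_of P m -> n = m.
Proof.
  intros [l [Hl [Hi <-]]] [l' [Hl' [Hi' <-]]].
  apply Nat.le_antisymm; apply NoDup_incl_length; auto; intros y Hy.
  - apply Hi', Hi, Hy.
  - apply Hi, Hi', Hy.
Qed.

Lemma lt_scaled_add (a b m n : nat) (eps : R) :
  INR (a + b) < eps * INR (m + n) -> INR a < eps * INR m \/ INR b < eps * INR n.
Proof.
  rewrite !plus_INR; intro H.
  destruct (Rlt_dec (INR a) (eps * INR m)); [now left | right; lra].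
Qed.

Lemma list_nonempty_of_lt_scaled {X : Type} (t : nat) (eps : R) (F : list X) :
  INR t < eps * INR (length F) -> F <> [].
Proof. intros H ->; simpl in H; pose proof (pos_INR t); lra. Qed.

Lemma Un_cv_ratio_eventually_lt (c d : nat -> nat) :
  (forall n, (0 < d n)%nat) ->
  Un_cv (fun n => INR (c n) / INR (d n)) 0 ->
  forall eps, 0 < eps -> exists N, forall n, (n >= N)%nat -> INR (c n) < eps * INR (d n).
Proof.
  intros Hd Hcv eps Heps.
  destruct (Hcv eps Heps) as [N HN]; exists N; intros n Hn.
  specialize (HN n Hn); unfold Rdist in HN; rewrite Rminus_0_r in HN.
  apply Rabs_def2 in HN as [HN _].
  assert (Hpos : 0 < INR (d n)) by (apply lt_0_INR, Hd).
  apply (Rmult_lt_compat_r (INR (d n))) in HN; [|exact Hpos].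
  unfold Rdiv in HN; rewrite Rmult_assoc, Rinv_l in HN by lra; lra.
Qed.

Section Boundary.

Variables (S X : Type) (alpha : S -> X -> option X).

Definition image_list (s : S) (F : list X) : list X :=
  flat_map (fun x => match alpha s x with Some y => [y] | None => [] end) F.

Definition boundary_list (s : S) (F : list X) : list X :=
  nodup classic_eq_dec
    (filter (fun y => if in_dec classic_eq_dec y F then false else true) (image_list s F)).

Lemma In_boundary_list s F y : In y (boundary_list s F) <-> boundary alpha s F y.
Proof.
  unfold boundary_list, boundary, image_list.
  rewrite nodup_In, filter_In, in_flat_map.
  destruct (in_dec classic_eq_dec y F) as [Hy | Hy]; split.
  - now intros [_ ?].
  - now intros [_ ?].
  - intros [[x [Hx Hxy]] _]; split; [|exact Hy]; exists x; split; [exact Hx|].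
    destruct (alpha s x); simpl in Hxy; [now destruct Hxy as [-> | []] | contradiction].
  - intros [[x [Hx Hxy]] _]; split; [|reflexivity].
    exists x; rewrite Hxy; simpl; auto.
Qed.

Lemma card_of_boundary_list s F : card_of (boundary alpha s F) (length (boundary_list s F)).
Proof.
  exists (boundary_list s F); split; [apply NoDup_nodup | split; [apply In_boundary_list | reflexivity]].
Qed.

Definition alpha_invariant (p : X -> bool) : Prop :=
  forall s u v, alpha s u = Some v -> p u = p v.

Lemma alpha_invariant_negb p : alpha_invariant p -> alpha_invariant (fun x => negb (p x)).
Proof. intros Hp s u v Huv; now rewrite (Hp s u v Huv). Qed.

Lemma boundary_filter p s F y :
  alpha_invariant p ->
  boundary alpha s (filter p F) y <-> boundary alpha s F y /\ p y = true.
Proof.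
  intros Hp; unfold boundary; split.
  - intros [[u [Hu Huy]] Hy]; apply filter_In in Hu as [Hu Hpu].
    assert (Hpy : p y = true) by now rewrite <- (Hp s u y Huy).
    repeat split; [now exists u | | exact Hpy].
    intro HyF; apply Hy, filter_In; auto.
  - intros [[[u [Hu Huy]] Hy] Hpy]; split.
    + exists u; split; [apply filter_In; split; [exact Hu|] | exact Huy].
      now rewrite (Hp s u y Huy).
    + now intros [HyF _]%filter_In.
Qed.

Lemma length_boundary_list_filter p s F :
  alpha_invariant p ->
  length (boundary_list s F) =
  (length (boundary_list s (filter p F)) +
   length (boundary_list s (filter (fun x => negb (p x)) F)))%nat.
Proof.
  intros Hp; rewrite <- length_app.
  apply (card_of_unique (boundary alpha s F)); [apply card_of_boundary_list|].
  exists (boundary_list s (filter p F) ++ boundary_list s (filter (fun x => negb (p x)) F)).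
  pose proof (alpha_invariant_negb p Hp) as Hnp.
  split; [| split; [intro y; rewrite in_app_iff, !In_boundary_list | reflexivity]].
  - apply NoDup_app; try apply NoDup_nodup.
    intros y H1 H2; apply In_boundary_list, boundary_filter in H1 as [_ H1]; [|exact Hp].
    apply In_boundary_list, boundary_filter in H2 as [_ H2]; [|exact Hnp].
    now rewrite H1 in H2.
  - rewrite (boundary_filter p), (boundary_filter (fun x => negb (p x))) by assumption.
    destruct (p y); simpl; tauto.
Qed.

Definition total_boundary (L : list S) (F : list X) : nat :=
  list_sum (map (fun s => length (boundary_list s F)) L).

Lemma total_boundary_filter p L F :
  alpha_invariant p ->
  total_boundary L F =
  (total_boundary L (filter p F) + total_boundary L (filter (fun x => negb (p x)) F))%nat.
Proof.
  intros Hp; induction L as [|s L IH]; [reflexivity|].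
  unfold total_boundary in *; simpl.
  rewrite IH, (length_boundary_list_filter p s F Hp); lia.
Qed.

Lemma length_boundary_list_le_total L F s :
  In s L -> (length (boundary_list s F) <= total_boundary L F)%nat.
Proof.
  unfold total_boundary; induction L as [|t L IH]; simpl; [tauto|].
  intros [-> | Hs]; [lia | specialize (IH Hs); lia].
Qed.

Lemma folner_total_boundary_eventually_lt (A : X -> Prop) (F : nat -> list X) :
  (forall n, fin_nonempty_subset A (F n)) ->
  (forall s, exists c : nat -> nat,
      (forall n, card_of (boundary alpha s (F n)) (c n)) /\
      Un_cv (fun n => INR (c n) / INR (length (F n))) 0) ->
  forall L eps, 0 < eps -> exists N, forall n, (n >= N)%nat ->
    INR (total_boundary L (F n)) < eps * INR (length (F n)).
Proof.
  intros HF Hc L.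
  assert (Hlen : forall n, (0 < length (F n))%nat).
  { intro n; destruct (HF n) as [_ [Hne _]]; destruct (F n); [congruence | simpl; lia]. }
  induction L as [|s L IH]; intros eps Heps.
  - exists 0%nat; intros n _; simpl.
    pose proof (lt_0_INR _ (Hlen n)); nra.
  - destruct (Hc s) as [c [Hcard Hcv]].
    destruct (Un_cv_ratio_eventually_lt c (fun n => length (F n)) Hlen Hcv (eps / 2))
      as [N1 HN1]; [lra|].
    destruct (IH (eps / 2)) as [N2 HN2]; [lra|].
    exists (max N1 N2); intros n Hn.
    specialize (HN1 n ltac:(lia)); specialize (HN2 n ltac:(lia)).
    rewrite (card_of_unique _ _ _ (Hcard n) (card_of_boundary_list s (F n))) in HN1.
    unfold total_boundary in *; simpl; rewrite plus_INR; lra.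
Qed.

Variables (mul : S -> S -> S) (star : S -> S) (one : S).
Hypothesis HS : is_inverse_monoid mul star one.
Hypothesis Halpha : is_representation mul one alpha.

Lemma orbit_rel_refl x : orbit_rel alpha x x.
Proof. destruct Halpha as [_ [Hone _]]; now exists one. Qed.

Lemma orbit_rel_trans x y z : orbit_rel alpha x y -> orbit_rel alpha y z -> orbit_rel alpha x z.
Proof.
  destruct Halpha as [_ [_ Hmul]]; intros [s Hs] [t Ht]; exists (mul t s).
  now rewrite Hmul; unfold pcomp; rewrite Hs.
Qed.

(* α_{s s* s} = α_s forces α_{s*}(α_s x) to be a preimage of α_s x, i.e. x itself. *)
Lemma orbit_rel_sym x y : orbit_rel alpha x y -> orbit_rel alpha y x.
Proof.
  destruct HS as [_ [_ [Hinv _]]]; destruct Halpha as [Hpb [_ Hmul]].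
  intros [s Hs]; exists (star s).
  assert (H : alpha (mul (mul s (star s)) s) x = Some y) by now rewrite (proj1 (Hinv s)).
  rewrite Hmul in H; unfold pcomp in H; rewrite Hs, Hmul in H; unfold pcomp in H.
  destruct (alpha (star s) y) as [w|] eqn:Ew; [|discriminate].
  f_equal; exact (Hpb s w x y H Hs).
Qed.

Definition orbit_classb (x y : X) : bool :=
  if excluded_middle_informative (orbit_rel alpha x y) then true else false.

Lemma orbit_classb_spec x y : orbit_classb x y = true <-> orbit_rel alpha x y.
Proof.
  unfold orbit_classb; destruct excluded_middle_informative; split; intro H;
    solve [reflexivity | assumption | discriminate | contradiction].
Qed.

Lemma alpha_invariant_orbit_classb x : alpha_invariant (orbit_classb x).
Proof.
  intros s u v Huv; apply Bool.eq_true_iff_eq; rewrite !orbit_classb_spec.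
  assert (Hs : orbit_rel alpha u v) by now exists s.
  split; intro Hx; eapply orbit_rel_trans; eauto using orbit_rel_sym.
Qed.

Lemma orbit_class_lt_scaled (A : X -> Prop) (L : list S) (eps : R) :
  forall F, fin_nonempty_subset A F ->
  INR (total_boundary L F) < eps * INR (length F) ->
  exists F0, fin_nonempty_subset A F0 /\
    (forall u v, In u F0 -> In v F0 -> orbit_rel alpha u v) /\
    INR (total_boundary L F0) < eps * INR (length F0).
Proof.
  intro F; induction F as [F IH] using (induction_ltof1 _ (@length X)).
  intros [HND [Hne HA]] HT.
  destruct F as [|x F']; [congruence|]; set (F := x :: F') in *.
  set (C := filter (orbit_classb x) F).
  set (R := filter (fun y => negb (orbit_classb x y)) F).
  assert (Hsub : forall p, filter p F <> [] -> fin_nonempty_subset A (filter p F)).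
  { intros p Hp; repeat split; [now apply NoDup_filter | exact Hp |].
    intros y [Hy _]%filter_In; now apply HA. }
  assert (HxC : In x C).
  { apply filter_In; split; [now left | apply orbit_classb_spec, orbit_rel_refl]. }
  rewrite (total_boundary_filter _ L F (alpha_invariant_orbit_classb x)), <- (filter_length
    (orbit_classb x) F) in HT.
  fold C R in HT; apply lt_scaled_add in HT as [HC | HR].
  - exists C; split; [exact (Hsub _ (list_nonempty_of_lt_scaled _ eps _ HC)) | split; [|exact HC]].
    intros u v [_ Hu]%filter_In [_ Hv]%filter_In; apply orbit_classb_spec in Hu, Hv.
    eauto using orbit_rel_trans, orbit_rel_sym.
  - apply (IH R); [| exact (Hsub _ (list_nonempty_of_lt_scaled _ eps _ HR)) | exact HR].
    unfold ltof; rewrite <- (filter_length (orbit_classb x) F); fold C R.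
    destruct C; [contradiction | simpl; lia].
Qed.

End Boundary.

Theorem mainTheorem17 (S : Type) (mul : S -> S -> S) (star : S -> S) (one : S)
  (HS : is_inverse_monoid mul star one) (Hcount : countable S)
  (X : Type) (alpha : S -> X -> option X) (Halpha : is_representation mul one alpha)
  (A : X -> Prop) (HA : domain_folner alpha A)
  (eps : R) (heps : 0 < eps) (calF : list S) :
  exists F0 : list X,
    fin_nonempty_subset A F0 /\
    (forall u v, In u F0 -> In v F0 -> orbit_rel alpha u v) /\
    (forall s, In s calF ->
       exists k : nat, card_of (boundary alpha s F0) k /\ INR k < eps * INR (length F0)).
Proof.
  destruct HA as [F [HF Hfolner]].
  destruct (folner_total_boundary_eventually_lt S X alpha A F HF Hfolner calF eps heps)
    as [N HN].
  destruct (orbit_class_lt_scaled S X alpha mul star one HS Halpha A calF eps (F N) (HF N)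
    (HN N (le_n N))) as [F0 [HF0 [Horbit Hsmall]]].
  exists F0; split; [exact HF0 | split; [exact Horbit |]].
  intros s Hs; exists (length (boundary_list S X alpha s F0)).
  split; [apply card_of_boundary_list |].
  eapply Rle_lt_trans; [apply le_INR, length_boundary_list_le_total, Hs | exact Hsmall].
Qed.
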